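(* Let $T$ be a pre-truss and let $P$ be a non-empty normal sub-heap of $T$. Let $\pi:T\to T/P$ be the canonical heap epimorphism onto the quotient heap by the sub-heap relation $\sim_P$. Then $\pi$ is a homomorphism of pre-trusses (that is, $\sim_P$ is compatible with the multiplication of $T$, so that $T/P$ carries an associative multiplication $\pi(a)\pi(b)=\pi(ab)$ making $\pi$ a pre-truss homomorphism) if and only if $P$ is a paragon.
   Context: A heap is a set $H$ with a ternary operation $[-,-,-]$ such that $[a_1,a_2,[a_3,a_4,a_5]]=[[a_1,a_2,a_3],a_4,a_5]$ and $[a,a,b]=b=[b,a,a]$ for all elements. A sub-heap is a subset closed under $[-,-,-]$. A normal sub-heap is a non-empty sub-heap $S$ such that $[[a,e,s],a,e]\in S$ for all $a\in H$, $e,s\in S$. For a non-empty sub-heap $S$, the relation $a\sim_S b$ holds iff there exists $s\in S$ with $[a,b,s]\in S$ (equivalently, for all $s\in S$); it is an equivalence relation, and for normal $S$ it is a heap congruence, giving the quotient heap $H/S$ and the canonical heap epimorphism $\pi$. A pre-truss is a heap $T$ together with an associative binary operation (written by juxtaposition); a homomorphism of pre-trusses is a map that is both a heap homomorphism and a semigroup homomorphism. A sub-heap $S$ of a pre-truss $T$ is left-closed if $[ts',ts,s]\in S$ for all $s,s'\in S$, $t\in T$; right-closed if $[s't,st,s]\in S$ for all $s,s'\in S$, $t\in T$; closed if both. A paragon is a non-empty normal sub-heap $P$ of $T$ such that every equivalence class of $\sim_P$ is a closed sub-heap of $T$. *)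

From Stdlib Require Import ClassicalEpsilon.
Set Implicit Arguments.

Section Defs.
Variable T : Type.
Variable h : T -> T -> T -> T.
Variable mul : T -> T -> T.

Definition is_heap : Prop :=
  (forall a1 a2 a3 a4 a5, h a1 a2 (h a3 a4 a5) = h (h a1 a2 a3) a4 a5) /\
  (forall a b, h a a b = b /\ h b a a = b).

Definition associative_op (m : T -> T -> T) : Prop :=
  forall a b c, m a (m b c) = m (m a b) c.

Definition is_pretruss : Prop := is_heap /\ associative_op mul.

Definition subheap (S : T -> Prop) : Prop :=
  forall a b c, S a -> S b -> S c -> S (h a b c).

Definition normal_subheap (S : T -> Prop) : Prop :=
  (exists s, S s) /\ subheap S /\
  (forall a e s, S e -> S s -> S (h (h a e s) a e)).

Definition simS (S : T -> Prop) (a b : T) : Prop :=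
  exists s, S s /\ S (h a b s).

Definition left_closed (S : T -> Prop) : Prop :=
  forall s s' t, S s -> S s' -> S (h (mul t s') (mul t s) s).
Definition right_closed (S : T -> Prop) : Prop :=
  forall s s' t, S s -> S s' -> S (h (mul s' t) (mul s t) s).
Definition closed_subheap (S : T -> Prop) : Prop :=
  subheap S /\ left_closed S /\ right_closed S.

Definition paragon (P : T -> Prop) : Prop :=
  normal_subheap P /\ forall a, closed_subheap (simS P a).

Definition quot (S : T -> Prop) : Type :=
  { C : T -> Prop | exists a, C = simS S a }.

Definition proj (S : T -> Prop) (a : T) : quot S :=
  exist _ (simS S a) (ex_intro _ a eq_refl).

Definition repr (S : T -> Prop) (X : quot S) : T :=
  proj1_sig (constructive_indefinite_description _ (proj2_sig X)).

(* Heap operation of the quotient heap T/S (well defined for S normal). *)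
Definition qheap (S : T -> Prop) (X Y Z : quot S) : quot S :=
  proj S (h (repr X) (repr Y) (repr Z)).

End Defs.

Definition pretruss_hom (T U : Type) (h : T -> T -> T -> T) (m : T -> T -> T)
  (k : U -> U -> U -> U) (n : U -> U -> U) (f : T -> U) : Prop :=
  (forall a b c, f (h a b c) = k (f a) (f b) (f c)) /\
  (forall a b, f (m a b) = n (f a) (f b)).

(* The relation ~P is a heap congruence, so T/P is a heap and pi a heap map.
   A multiplication on T/P making pi multiplicative exists exactly when ~P is
   compatible with multiplication on each side separately.  Compatibility on
   the left, t s' ~ t s whenever s' ~ s, is the same as left closedness of
   every class, because [x, y, s] ~ s holds iff x ~ y; the right side is
   symmetric, and classes are automatically sub-heaps. *)

From Stdlib Require Import ClassicalEpsilon ProofIrrelevance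
  FunctionalExtensionality PropExtensionality.

Section Heap.
Context {T : Type} {h : T -> T -> T -> T}.
Hypothesis HH : is_heap h.

Lemma heap_assoc a b c d e : h a b (h c d e) = h (h a b c) d e.
Proof. exact (proj1 HH a b c d e). Qed.

Lemma heap_cancel_l a b : h a a b = b.
Proof. exact (proj1 (proj2 HH a b)). Qed.

Lemma heap_cancel_r a b : h b a a = b.
Proof. exact (proj2 (proj2 HH a b)). Qed.

Lemma heap_assoc_mid a b c d e : h (h a b c) d e = h a (h d c b) e.
Proof.
  rewrite <- (heap_cancel_l (h d c b) e) at 1.
  rewrite heap_assoc, (heap_assoc (h a b c) d d c b), heap_cancel_r,
    <- (heap_assoc a b c c b), heap_cancel_l, heap_cancel_r.
  reflexivity.
Qed.

Section NormalSubheap.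
Context {P : T -> Prop}.
Hypothesis HP : normal_subheap h P.

Local Notation sim := (simS h P).

Lemma simS_subheap a b s : sim a b -> P s -> P (h a b s).
Proof.
  intros [s0 [Hs0 Hab]] Hs.
  replace (h a b s) with (h (h a b s0) s0 s).
  - exact (proj1 (proj2 HP) _ _ _ Hab Hs0 Hs).
  - rewrite <- heap_assoc, heap_cancel_l. reflexivity.
Qed.

Lemma simS_refl a : sim a a.
Proof.
  destruct (proj1 HP) as [s Hs]. exists s. rewrite heap_cancel_l. auto.
Qed.

Lemma simS_sym a b : sim a b -> sim b a.
Proof.
  intros [s [Hs Hab]]. exists s; split; auto.
  replace (h b a s) with (h s (h a b s) s).
  - apply (proj1 (proj2 HP)); auto.
  - rewrite <- heap_assoc_mid, heap_cancel_l. reflexivity.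
Qed.

Lemma simS_trans a b c : sim a b -> sim b c -> sim a c.
Proof.
  intros Hab Hbc. destruct (proj1 HP) as [s Hs]. exists s; split; auto.
  replace (h a c s) with (h (h a b s) s (h b c s)).
  - apply (proj1 (proj2 HP)); auto using simS_subheap.
  - rewrite <- heap_assoc, heap_cancel_l, heap_assoc, heap_cancel_r.
    reflexivity.
Qed.

Lemma simS_heap_l a a' b c : sim a a' -> sim (h a b c) (h a' b c).
Proof.
  intros Ha. destruct (proj1 HP) as [s Hs]. exists s; split; auto.
  replace (h (h a b c) (h a' b c) s) with (h a a' s); auto using simS_subheap.
  rewrite <- (heap_assoc a b c), <- (heap_assoc_mid c c b a' s), heap_cancel_l,
    heap_assoc, heap_cancel_r.
  reflexivity.
Qed.

(* The only use of normality: [[a, b, c], [a, b, c'], s] is the conjugate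
   [[x, s, [c, c', s]], x, s] of [c, c', s] by x = [a, b, s]. *)
Lemma simS_heap_r a b c c' : sim c c' -> sim (h a b c) (h a b c').
Proof.
  intros Hc. destruct (proj1 HP) as [s Hs]. exists s; split; auto.
  assert (E1 : h (h a b c) (h a b c') s = h a b (h c c' (h b a s))).
  { rewrite (heap_assoc_mid a b c (h a b c') s), <- (heap_assoc a b c' c b),
      <- (heap_assoc_mid a (h c' c b) b a s), <- (heap_assoc_mid a b c c' b),
      <- (heap_assoc (h a b c) c' b a s), <- (heap_assoc a b c c' (h b a s)).
    reflexivity. }
  assert (E2 : h (h (h a b s) s (h c c' s)) (h a b s) s
               = h a b (h c c' (h b a s))).
  { rewrite <- (heap_assoc (h a b s) s (h c c' s)), <- (heap_assoc a b s s _),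
      heap_cancel_l, <- (heap_assoc c c' s (h a b s) s),
      <- (heap_assoc_mid s s b a s), heap_cancel_l.
    reflexivity. }
  rewrite E1, <- E2. apply (proj2 (proj2 HP)); auto using simS_subheap.
Qed.

Lemma simS_heap_m a b b' c : sim b b' -> sim (h a b c) (h a b' c).
Proof.
  intros Hb.
  replace (h a b c) with (h (h a b b') b' c)
    by (rewrite <- heap_assoc, heap_cancel_l; reflexivity).
  apply simS_heap_l. rewrite <- (heap_cancel_r b a) at 2.
  apply simS_heap_r, simS_sym, Hb.
Qed.

Lemma simS_heap a a' b b' c c' : sim a a' -> sim b b' -> sim c c' ->
  sim (h a b c) (h a' b' c').
Proof.
  intros Ha Hb Hc.
  apply simS_trans with (h a' b c); [apply simS_heap_l; auto |].
  apply simS_trans with (h a' b' c); [apply simS_heap_m; auto |].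
  apply simS_heap_r; auto.
Qed.

Lemma simS_heap_cancel x y b : sim (h x y b) b <-> sim x y.
Proof.
  assert (E : forall s, h (h x y b) b s = h x y s).
  { intros s. rewrite <- heap_assoc, heap_cancel_l. reflexivity. }
  unfold simS. split; intros [s Hs]; exists s; rewrite ?E in *; exact Hs.
Qed.

Lemma simS_class_subheap a : subheap h (sim a).
Proof.
  intros x y z Hx Hy Hz. rewrite <- (heap_cancel_l a a) at 1.
  apply simS_heap; auto.
Qed.

Lemma proj_eq_iff a b : proj h P a = proj h P b <-> sim a b.
Proof.
  split.
  - intros E. apply (f_equal (@proj1_sig _ _)) in E. simpl in E.
    rewrite E. apply simS_refl.
  - intros Hab. apply eq_sig_hprop; [intros; apply proof_irrelevance |]. simpl.
    extensionality x. apply propositional_extensionality.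
    split; intros Hx; eauto using simS_trans, simS_sym.
Qed.

Lemma proj_repr (X : quot h P) : proj h P (repr X) = X.
Proof.
  apply eq_sig_hprop; [intros; apply proof_irrelevance |]. simpl. unfold repr.
  destruct (constructive_indefinite_description _ (proj2_sig X)) as [x Hx].
  symmetry. exact Hx.
Qed.

Lemma simS_repr_proj a : sim (repr (proj h P a)) a.
Proof. apply proj_eq_iff, proj_repr. Qed.

Lemma class_left_closed_iff (mul : T -> T -> T) :
  (forall a, left_closed h mul (sim a)) <->
  (forall t s s', sim s s' -> sim (mul t s) (mul t s')).
Proof.
  split.
  - intros Hcl t s s' Hs. apply simS_sym, (simS_heap_cancel _ _ s), simS_sym.
    exact (Hcl s s s' t (simS_refl s) Hs).
  - intros Hcomp a s s' t Hs Hs'.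
    apply simS_trans with s; auto.
    apply simS_sym, simS_heap_cancel, Hcomp.
    eauto using simS_trans, simS_sym.
Qed.

Section Multiplication.
Variable mul : T -> T -> T.

Definition mul_compatible : Prop :=
  forall x x' y y', sim x x' -> sim y y' -> sim (mul x y) (mul x' y').

Lemma paragon_iff_mul_compatible : paragon h mul P <-> mul_compatible.
Proof.
  (* right closedness for [mul] is left closedness for the opposite product *)
  pose proof (class_left_closed_iff mul) as Hl.
  pose proof (class_left_closed_iff (fun x y => mul y x)) as Hr.
  unfold paragon, closed_subheap. split.
  - intros [_ Hcl] x x' y y' Hx Hy.
    apply simS_trans with (mul x' y).
    + apply Hr; auto. intros a. apply Hcl.
    + apply Hl; auto. intros a. apply Hcl.
  - intros Hcomp. split; [exact HP |]. intros a.
    split; [apply simS_class_subheap |]. split.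
    + revert a. apply Hl. intros t s s' Hs. apply Hcomp; auto using simS_refl.
    + revert a. apply Hr. intros t s s' Hs. apply Hcomp; auto using simS_refl.
Qed.

Lemma mul_compatible_of_proj_mul (qmul : quot h P -> quot h P -> quot h P) :
  (forall a b, proj h P (mul a b) = qmul (proj h P a) (proj h P b)) ->
  mul_compatible.
Proof.
  intros Hmul x x' y y' Hx Hy. apply proj_eq_iff.
  rewrite !Hmul, (proj2 (proj_eq_iff _ _) Hx), (proj2 (proj_eq_iff _ _) Hy).
  reflexivity.
Qed.

Definition quot_mul (X Y : quot h P) : quot h P :=
  proj h P (mul (repr X) (repr Y)).

Hypothesis Hcomp : mul_compatible.

Lemma proj_mul a b : proj h P (mul a b) = quot_mul (proj h P a) (proj h P b).
Proof.
  apply proj_eq_iff, Hcomp; apply simS_sym, simS_repr_proj.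
Qed.

Lemma quot_mul_assoc : associative_op mul -> associative_op quot_mul.
Proof.
  intros Hass X Y Z.
  rewrite <- (proj_repr X), <- (proj_repr Y), <- (proj_repr Z),
    <- !proj_mul, Hass.
  reflexivity.
Qed.

End Multiplication.

Lemma proj_heap a b c :
  proj h P (h a b c) = qheap (proj h P a) (proj h P b) (proj h P c).
Proof.
  apply proj_eq_iff, simS_heap; apply simS_sym, simS_repr_proj.
Qed.
End NormalSubheap.
End Heap.

Theorem theorem3p14 (T : Type) (h : T -> T -> T -> T) (mul : T -> T -> T)
  (HT : is_pretruss h mul) (P : T -> Prop) (HP : normal_subheap h P) :
  (exists qmul : quot h P -> quot h P -> quot h P,
      associative_op qmul /\
      pretruss_hom h mul (@qheap T h P) qmul (@proj T h P))
  <-> paragon h mul P.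
Proof.
  destruct HT as [HH Hass].
  rewrite (paragon_iff_mul_compatible HH HP). split.
  - intros [qmul [_ [_ Hmul]]]. exact (mul_compatible_of_proj_mul HH HP mul qmul Hmul).
  - intros Hcomp. exists (quot_mul mul).
    split; [| split].
    + exact (quot_mul_assoc HH HP mul Hcomp Hass).
    + exact (proj_heap HH HP).
    + exact (proj_mul HH HP mul Hcomp).
Qed.
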